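(* Let $G$ and $H$ be graphs, each with at least two vertices. (1) If $n_1,n_2\ge1$ and $r_1,r_2\in(0,1)$ with $r_1^2+r_2^2=1$ are such that $G$ admits a spherical embedding of dimension $n_1$ and radius $r_1$ and $H$ admits a spherical embedding of dimension $n_2$ and radius $r_2$, then $G+H$ has a unit-distance embedding in $\mathbb{R}^{n_1+n_2}$. (2) Conversely, if $G+H$ has a unit-distance embedding in $\mathbb{R}^n$, then there exist $n_1,n_2\ge1$ with $n_1+n_2=n$ and $r_1,r_2\in(0,1)$ with $r_1^2+r_2^2=1$ such that $G$ admits a spherical embedding of dimension $n_1$ and radius $r_1$ and $H$ admits a spherical embedding of dimension $n_2$ and radius $r_2$.
   Context: All graphs are finite and simple. A unit-distance embedding of a graph $G$ in $\mathbb{R}^n$ is an injective map $f$ from the vertex set of $G$ to $\mathbb{R}^n$ such that $|f(u)-f(v)|=1$ for every edge $uv$ and no point $f(w)$ lies on the segment $[f(u),f(v)]$ for an edge $uv$ with $w\notin\{u,v\}$ (edges may cross one another). $G$ admits a spherical embedding of dimension $k$ and radius $r$ if $G$ has a unit-distance embedding in $\mathbb{R}^k$ all of whose vertices lie on a sphere $\{x\in\mathbb{R}^k:|x-c|=r\}$. The sum $G+H$ is obtained from disjoint copies of $G$ and $H$ by adding all edges between a vertex of $G$ and a vertex of $H$. *)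

From HB Require Import structures.
From mathcomp Require Import all_boot all_order all_algebra.
From mathcomp Require Import reals.
Set Implicit Arguments. Unset Strict Implicit. Unset Printing Implicit Defensive.
Import Order.TTheory GRing.Theory Num.Theory.
Local Open Scope ring_scope.

Definition simple_graph (T : finType) (e : rel T) : Prop :=
  symmetric e /\ irreflexive e.

Definition sqdist (R : realType) (n : nat) (x y : 'rV[R]_n) : R :=
  \sum_(i < n) (x 0 i - y 0 i) ^+ 2.

Definition edist (R : realType) (n : nat) (x y : 'rV[R]_n) : R :=
  Num.sqrt (sqdist x y).

Definition on_segment (R : realType) (n : nat) (a b w : 'rV[R]_n) : Prop :=
  exists t : R, 0 <= t <= 1 /\ w = (1 - t) *: a + t *: b.

Definition unit_dist_embedding (R : realType) (T : finType) (e : rel T)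
    (n : nat) (f : T -> 'rV[R]_n) : Prop :=
  [/\ injective f,
      (forall u v, e u v -> edist (f u) (f v) = 1) &
      (forall u v w, e u v -> w != u -> w != v ->
         ~ on_segment (f u) (f v) (f w))].

Definition has_unit_dist_embedding (R : realType) (T : finType) (e : rel T)
    (n : nat) : Prop :=
  exists f : T -> 'rV[R]_n, unit_dist_embedding e f.

Definition spherical_embedding (R : realType) (T : finType) (e : rel T)
    (k : nat) (r : R) : Prop :=
  exists (f : T -> 'rV[R]_k) (c : 'rV[R]_k),
    unit_dist_embedding e f /\ forall x, edist (f x) c = r.

Definition graph_join (T1 T2 : finType) (e1 : rel T1) (e2 : rel T2)
    : rel (T1 + T2)%type :=
  fun x y => match x, y with
  | inl a, inl b => e1 a b
  | inr a, inr b => e2 a b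
  | _, _ => true
  end.

From HB Require Import structures.
From mathcomp Require Import all_boot all_order all_algebra.
From mathcomp Require Import reals.
From mathcomp Require Import ring lra zify.
Import Order.TTheory GRing.Theory Num.Theory.
Local Open Scope ring_scope.
Set Implicit Arguments. Unset Strict Implicit. Unset Printing Implicit Defensive.

(* (1) If G sits on a sphere of radius r1 in R^n1 and H on a sphere of radius
   r2 in R^n2, centre both spheres at the origin and place them in the two
   orthogonal factors of R^n1 x R^n2.  Every vertex of G is then at distance
   sqrt (r1^2 + r2^2) = 1 from every vertex of H, and no vertex lies on an
   edge of the other factor or on a "cross" edge (lemma [join_embedding]).

   (2) Conversely, let F embed G + H in R^n with P = F on G and Q = F on H.
   All cross distances are 1, so by polarization the difference vectors
   P a - P a0 are orthogonal to the differences Q b - Q b0.  Gram-Schmidt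
   gives an orthonormal basis s1 ++ s2 of R^n in which s1 spans the first
   family; in these coordinates P lives on a sphere of the s1-factor and Q
   on a sphere of the s2-factor, and Pythagoras shows that the two squared
   radii add up to 1 (section [JoinSplit]).  Distances are preserved and the
   coordinate maps have affine inverses on the two point sets, which carries
   the unit-distance embedding over ([unit_dist_embedding_lift]). *)

Section InnerProduct.
Variables (R : realType) (n : nat).
Implicit Types (x y z c : 'rV[R]_n).

Definition dot x y : R := \sum_(i < n) x 0 i * y 0 i.

Lemma dotC x y : dot x y = dot y x.
Proof. by apply: eq_bigr => i _; rewrite mulrC. Qed.

Lemma dotDl x y z : dot (x + y) z = dot x z + dot y z.
Proof. by rewrite /dot -big_split; apply: eq_bigr => i _; rewrite !mxE mulrDl. Qed.

Lemma dotZl (a : R) x z : dot (a *: x) z = a * dot x z.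
Proof. by rewrite /dot mulr_sumr; apply: eq_bigr => i _; rewrite !mxE mulrA. Qed.

Lemma dotBl x y z : dot (x - y) z = dot x z - dot y z.
Proof. by rewrite dotDl -scaleN1r dotZl mulN1r. Qed.

Lemma dot_suml m (F : 'I_m -> 'rV[R]_n) z :
  dot (\sum_(i < m) F i) z = \sum_(i < m) dot (F i) z.
Proof. by rewrite /dot exchange_big; apply: eq_bigr => j _; rewrite summxE mulr_suml. Qed.

Lemma dotDr x y z : dot z (x + y) = dot z x + dot z y.
Proof. by rewrite dotC dotDl !(dotC z). Qed.

Lemma dotZr (a : R) x z : dot z (a *: x) = a * dot z x.
Proof. by rewrite dotC dotZl dotC. Qed.

Lemma dotBr x y z : dot z (x - y) = dot z x - dot z y.
Proof. by rewrite dotC dotBl !(dotC z). Qed.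

Lemma dot_sumr m (F : 'I_m -> 'rV[R]_n) z :
  dot z (\sum_(i < m) F i) = \sum_(i < m) dot z (F i).
Proof. by rewrite dotC dot_suml; apply: eq_bigr => i _; rewrite dotC. Qed.

Lemma dot_ge0 x : 0 <= dot x x.
Proof. by apply: sumr_ge0 => i _; rewrite -expr2 sqr_ge0. Qed.

Lemma dot_eq0 x : dot x x = 0 -> x = 0.
Proof.
move/eqP; rewrite psumr_eq0 => [/allP x0|i _]; last by rewrite -expr2 sqr_ge0.
apply/rowP => j; rewrite mxE.
by have /= := x0 j (mem_index_enum _); rewrite -expr2 sqrf_eq0 => /eqP.
Qed.

Lemma dot_gt0 x : x != 0 -> 0 < dot x x.
Proof. by move=> x0; rewrite lt_def dot_ge0 andbT; apply: contra x0 => /eqP/dot_eq0 ->. Qed.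

Lemma sqdistE x y : sqdist x y = dot (x - y) (x - y).
Proof. by apply: eq_bigr => i _; rewrite !mxE expr2. Qed.

Lemma sqdistC x y : sqdist x y = sqdist y x.
Proof. by apply: eq_bigr => i _; rewrite -sqrrN opprB. Qed.

Lemma sqdist_ge0 x y : 0 <= sqdist x y.
Proof. by rewrite sqdistE dot_ge0. Qed.

Lemma sqdist_eq0 x y : sqdist x y = 0 -> x = y.
Proof. by rewrite sqdistE => /dot_eq0 /eqP; rewrite subr_eq0 => /eqP. Qed.

Lemma sqdist_xx x : sqdist x x = 0.
Proof. by apply: big1 => i _; rewrite subrr expr0n. Qed.

Lemma sqdist_translate x y c : sqdist (x - c) (y - c) = sqdist x y.
Proof. by rewrite !sqdistE opprB addrA subrK. Qed.

Lemma sqdist_sub0 x c : sqdist (x - c) 0 = sqdist x c.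
Proof. by rewrite !sqdistE subr0. Qed.

Lemma edist_sq x y (r : R) : edist x y = r -> sqdist x y = r ^+ 2.
Proof. by rewrite /edist => <-; rewrite sqr_sqrtr // sqdist_ge0. Qed.

Lemma polarization x x0 y y0 :
  2 * dot (x - x0) (y - y0) = sqdist x y0 + sqdist x0 y - sqdist x y - sqdist x0 y0.
Proof.
rewrite /sqdist /dot mulr_sumr -big_split -!sumrB /=.
by apply: eq_bigr => i _; rewrite !mxE; ring.
Qed.

Lemma on_segment_sym x y w : on_segment x y w -> on_segment y x w.
Proof.
case=> t [/andP [t0 t1] ->]; exists (1 - t); split; first by apply/andP; lra.
by rewrite addrC (_ : 1 - (1 - t) = t) //; ring.
Qed.

Lemma dim_gt0 (x y : 'rV[R]_n) : x != y -> (0 < n)%N.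
Proof. by case: n x y => // x y; rewrite !thinmx0 eqxx. Qed.

End InnerProduct.

Lemma sqdist_row_mx (R : realType) (k m : nat) (a a' : 'rV[R]_k) (b b' : 'rV[R]_m) :
  sqdist (row_mx a b) (row_mx a' b') = sqdist a a' + sqdist b b'.
Proof.
rewrite /sqdist big_split_ord /=; congr (_ + _); apply: eq_bigr => i _;
  by rewrite ?row_mxEl ?row_mxEr.
Qed.

Lemma on_segment_row_mx (R : realType) (k m : nat) (a a' a'' : 'rV[R]_k)
    (b b' b'' : 'rV[R]_m) :
  on_segment (row_mx a b) (row_mx a' b') (row_mx a'' b'') ->
  exists t : R, [/\ 0 <= t <= 1, a'' = (1 - t) *: a + t *: a' &
                    b'' = (1 - t) *: b + t *: b'].
Proof.
by case=> t [t01]; rewrite !scale_row_mx add_row_mx => /eq_row_mx [-> ->]; exists t.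
Qed.

Section Orthonormal.
Variables (R : realType) (n : nat).
Implicit Types (s : seq 'rV[R]_n) (x w : 'rV[R]_n).

Definition orthonormal s :=
  forall i j, (i < size s)%N -> (j < size s)%N -> dot s`_i s`_j = (i == j)%:R.

Definition proj s x : 'rV[R]_n := \sum_(i < size s) dot x s`_i *: s`_i.

Definition coord s x : 'rV[R]_(size s) := \row_(j < size s) dot x s`_j.

Definition rows_mx s : 'M[R]_(size s, n) := \matrix_(i < size s, j < n) s`_i 0 j.

Lemma dot_proj s x j : orthonormal s -> (j < size s)%N -> dot (proj s x) s`_j = dot x s`_j.
Proof.
move=> s_on lt_j; rewrite /proj dot_suml (bigD1 (Ordinal lt_j)) //= dotZl s_on //.
rewrite eqxx mulr1 big1 ?addr0 // => i /negbTE ij; rewrite dotZl s_on //.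
by rewrite (_ : (i == j :> nat) = false) ?mulr0 // -[j]/(val (Ordinal lt_j)) val_eqE.
Qed.

Lemma dotr_proj s x w : dot w (proj s x) = \sum_(i < size s) dot x s`_i * dot w s`_i.
Proof. by rewrite /proj dot_sumr; apply: eq_bigr => i _; rewrite dotZr. Qed.

Lemma dot_proj_orth s x w : (forall u, u \in s -> dot w u = 0) -> dot w (proj s x) = 0.
Proof. by move=> w_s; rewrite dotr_proj big1 // => i _; rewrite w_s ?mulr0 ?mem_nth. Qed.

Lemma proj_cat s0 s1 x : proj (s0 ++ s1) x = proj s0 x + proj s1 x.
Proof.
rewrite /proj size_cat big_split_ord /=; congr (_ + _); apply: eq_bigr => i _.
  by rewrite nth_cat ltn_ord.
by rewrite nth_cat (_ : (size s0 + i < size s0)%N = false) ?addKn //; lia.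
Qed.

Lemma orthonormal_cat_orth s0 s1 i j : orthonormal (s0 ++ s1) ->
  (j < size s0)%N -> (i < size s1)%N -> dot s0`_j s1`_i = 0.
Proof.
move=> s_on lt_j lt_i; have := s_on j (size s0 + i)%N.
rewrite size_cat !nth_cat lt_j (_ : (size s0 + i < size s0)%N = false); last by lia.
by rewrite addKn (_ : (j == size s0 + i)%N = false); [apply; lia | lia].
Qed.

Lemma proj_cat_span s0 s1 x :
  orthonormal (s0 ++ s1) -> proj s0 x = x -> proj (s0 ++ s1) x = x.
Proof.
move=> s_on px; rewrite proj_cat px -[RHS]addr0; congr (_ + _).
rewrite /proj big1 // => i _; rewrite -px dotC dot_proj_orth ?scale0r //.
by move=> u /(nthP 0) [j lt_j <-]; rewrite dotC (orthonormal_cat_orth s_on).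
Qed.

Lemma orthonormal_rcons s b : orthonormal s ->
  (forall j, (j < size s)%N -> dot s`_j b = 0) -> dot b b = 1 ->
  orthonormal (rcons s b).
Proof.
move=> s_on b_orth bb i j; rewrite size_rcons !ltnS !nth_rcons => le_i le_j.
have [lt_i|->] : (i < size s)%N \/ i = size s by lia.
  have [lt_j|->] : (j < size s)%N \/ j = size s by lia.
    by rewrite lt_i lt_j s_on.
  by rewrite lt_i ltnn eqxx b_orth // (_ : (i == size s) = false) //; lia.
have [lt_j|->] : (j < size s)%N \/ j = size s by lia.
  by rewrite lt_j ltnn eqxx dotC b_orth // (_ : (size s == j) = false) //; lia.
by rewrite ltnn eqxx.
Qed.

(* One Gram-Schmidt step: extend [s0] by at most one unit vector so that the
   span contains [v]; the new vector lies in the span of [s0] and [v]. *)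
Lemma orthonormal_extend1 s0 v : orthonormal s0 ->
  exists s', [/\ orthonormal (s0 ++ s'), proj (s0 ++ s') v = v &
    forall w, (forall u, u \in s0 -> dot w u = 0) -> dot w v = 0 ->
      forall b, b \in s' -> dot w b = 0].
Proof.
move=> s0_on; set w0 := v - proj s0 v.
have w0_orth u : u \in s0 -> dot w0 u = 0.
  by case/(nthP 0) => j lt_j <-; rewrite /w0 dotBl dot_proj // subrr.
have [w0_eq0 | w0_neq0] := eqVneq w0 0.
  exists [::]; rewrite cats0; split => //.
  by apply/eqP; rewrite eq_sym -subr_eq0 -/w0 w0_eq0.
set k := (Num.sqrt (dot w0 w0))^-1.
have k2_dot : k ^+ 2 * dot w0 w0 = 1.
  by rewrite exprVn sqr_sqrtr ?dot_ge0 // mulVf // gt_eqF // dot_gt0.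
have v_w0 : dot v w0 = dot w0 w0.
  by rewrite -{1}(subrK (proj s0 v) v) -/w0 dotDl dotC dot_proj_orth ?addr0.
exists [:: k *: w0]; split.
- rewrite cats1; apply: orthonormal_rcons => //.
    by move=> j lt_j; rewrite dotZr dotC w0_orth ?mem_nth ?mulr0.
  by rewrite dotZl dotZr mulrA -expr2 k2_dot.
- rewrite proj_cat /proj big_ord1 /= dotZr scalerA -mulrA mulrC -mulrA mulrC.
  by rewrite v_w0 -expr2 k2_dot scale1r /w0 addrC subrK.
- move=> w w_s0 w_v b; rewrite inE => /eqP ->.
  by rewrite dotZr /w0 dotBr w_v dot_proj_orth // subrr mulr0.
Qed.

(* Gram-Schmidt: extend [s0] to an orthonormal family whose span contains
   all of [V], adding only vectors in the span of [s0] and [V]. *)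
Lemma orthonormal_extend (V : seq 'rV[R]_n) s0 : orthonormal s0 ->
  exists s1, [/\ orthonormal (s0 ++ s1),
    (forall v, v \in V -> proj (s0 ++ s1) v = v) &
    forall w, (forall u, u \in s0 -> dot w u = 0) ->
      (forall v, v \in V -> dot w v = 0) -> forall b, b \in s1 -> dot w b = 0].
Proof.
elim: V s0 => [|v V IH] s0 s0_on; first by exists [::]; rewrite cats0.
have [s' [on' proj_v orth']] := orthonormal_extend1 v s0_on.
have [s'' [on'' proj_V orth'']] := IH _ on'.
exists (s' ++ s''); rewrite catA; split => //.
  by move=> x; rewrite inE => /predU1P [->|/proj_V //]; apply: proj_cat_span.
move=> w w_s0 w_V; have w_s' := orth' w w_s0 (w_V v (mem_head _ _)).
move=> b; rewrite mem_cat => /orP [/w_s' //|]; apply: orth''.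
  by move=> u; rewrite mem_cat => /orP [/w_s0|/w_s'].
by move=> x x_V; rewrite w_V // inE x_V orbT.
Qed.

Lemma coordD s x w : coord s (x + w) = coord s x + coord s w.
Proof. by apply/rowP => j; rewrite !mxE dotDl. Qed.

Lemma coord_mulmx s x : coord s x *m rows_mx s = proj s x.
Proof. by apply/rowP => j; rewrite !mxE summxE; apply: eq_bigr => i _; rewrite !mxE. Qed.

Lemma coord_mx s x : coord s x = x *m (rows_mx s)^T.
Proof. by apply/rowP => j; rewrite !mxE; apply: eq_bigr => k _; rewrite !mxE. Qed.

Lemma proj_mx s x : proj s x = x *m ((rows_mx s)^T *m rows_mx s).
Proof. by rewrite mulmxA -coord_mx coord_mulmx. Qed.

Lemma rows_mx_full s : (forall i : 'I_n, proj s 'e_i = 'e_i) ->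
  (rows_mx s)^T *m rows_mx s = 1%:M.
Proof. by move=> s_e; apply/row_matrixP => i; rewrite !rowE -proj_mx s_e mulmx1. Qed.

Lemma size_onb s : orthonormal s -> (forall x, proj s x = x) -> size s = n.
Proof.
move=> s_on s_full; have TS := rows_mx_full (fun i => s_full 'e_i).
have ST : rows_mx s *m (rows_mx s)^T = 1%:M.
  apply/matrixP => i j; rewrite !mxE; transitivity (dot s`_i s`_j).
    by apply: eq_bigr => k _; rewrite !mxE.
  by rewrite s_on.
apply/eqP; rewrite eqn_leq; apply/andP; split.
  rewrite -{1}(mxrank1 R (size s)) -ST.
  exact: leq_trans (mxrankM_maxl _ _) (rank_leq_col _).
rewrite -{1}(mxrank1 R n) -TS.
by apply: leq_trans (mxrankM_maxl _ _) _; rewrite mxrank_tr rank_leq_row.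
Qed.

Lemma adapted_onb (V : seq 'rV[R]_n) : exists s1 s2,
  [/\ orthonormal (s1 ++ s2), forall x, proj (s1 ++ s2) x = x,
      forall v, v \in V -> proj s1 v = v &
      forall w, (forall v, v \in V -> dot w v = 0) -> forall b, b \in s1 -> dot w b = 0].
Proof.
have on0 : orthonormal (@nil 'rV[R]_n) by [].
have [s1 [on1 proj1 orth1]] := orthonormal_extend V on0.
have [s2 [on12 proj12 _]] := orthonormal_extend [seq 'e_i | i <- enum 'I_n] on1.
exists s1, s2; split => //.
- move=> x; rewrite proj_mx rows_mx_full ?mulmx1 // => i.
  by apply/proj12/map_f; rewrite mem_enum.
- by move=> w w_V; apply: orth1.
Qed.

Lemma sqdist_coord s1 s2 x w : (forall x, proj (s1 ++ s2) x = x) ->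
  sqdist (coord s1 x) (coord s1 w) + sqdist (coord s2 x) (coord s2 w) = sqdist x w.
Proof.
move=> s_full; rewrite [RHS]sqdistE -[X in dot _ X](s_full (x - w)) proj_cat.
rewrite dotDr !dotr_proj /sqdist.
by congr (_ + _); apply: eq_bigr => j _; rewrite !mxE -dotBl expr2.
Qed.

End Orthonormal.

Section Transfer.
Variables (R : realType) (T : finType) (e : rel T).

Lemma affine_combination (m n : nat) (c : 'rV[R]_n) (M : 'M[R]_(m, n)) t x y :
  c + ((1 - t) *: x + t *: y) *m M = (1 - t) *: (c + x *m M) + t *: (c + y *m M).
Proof.
by rewrite mulmxDl -!scalemxAl !scalerDr addrACA -scalerDl subrK scale1r.
Qed.

(* If g has the same pairwise distances as an embedding f and f is an affine
   image of g, then g is an embedding too: a vertex on an edge segment for g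
   would be mapped onto the corresponding edge segment for f. *)
Lemma unit_dist_embedding_lift (m n : nat) (f : T -> 'rV[R]_n) (g : T -> 'rV[R]_m)
    (c : 'rV[R]_n) (M : 'M[R]_(m, n)) :
  (forall u, f u = c + g u *m M) ->
  (forall u v, sqdist (g u) (g v) = sqdist (f u) (f v)) ->
  unit_dist_embedding e f -> unit_dist_embedding e g.
Proof.
move=> f_g dist_g [f_inj f_edge f_seg]; split.
- by move=> u v guv; apply: f_inj; rewrite !f_g guv.
- by move=> u v uv; rewrite /edist dist_g -/(edist _ _) f_edge.
- move=> u v w uv wu wv [t [t01 gw]]; apply: (f_seg u v w uv wu wv).
  by exists t; split; rewrite // !f_g gw affine_combination.
Qed.

Lemma unit_dist_embedding_translate (n : nat) (f : T -> 'rV[R]_n) (c : 'rV[R]_n) :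
  unit_dist_embedding e f -> unit_dist_embedding e (fun u => f u - c).
Proof.
apply: (unit_dist_embedding_lift (c := c) (M := 1%:M)) => [u|u v].
  by rewrite mulmx1 addrC subrK.
exact: sqdist_translate.
Qed.

Lemma unit_dist_embedding_sub (T' : finType) (e' : rel T') (h : T' -> T)
    (n : nat) (F : T -> 'rV[R]_n) :
  injective h -> (forall u v, e' u v -> e (h u) (h v)) ->
  unit_dist_embedding e F -> unit_dist_embedding e' (fun u => F (h u)).
Proof.
move=> h_inj h_edge [F_inj F_edge F_seg]; split.
- by move=> u v /F_inj /h_inj.
- by move=> u v /h_edge /F_edge.
- by move=> u v w /h_edge uv wu wv; apply: F_seg; rewrite // inj_eq.
Qed.

End Transfer.

Section Join.
Variables (R : realType) (T1 T2 : finType) (e1 : rel T1) (e2 : rel T2) (k m : nat).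
Variables (p : T1 -> 'rV[R]_k) (q : T2 -> 'rV[R]_m).
Hypotheses (p_nz : forall a, p a != 0) (q_nz : forall b, q b != 0).

Definition join_map (x : T1 + T2) : 'rV[R]_(k + m) :=
  match x with inl a => row_mx (p a) 0 | inr b => row_mx 0 (q b) end.

Lemma join_cross_segment u v w : injective p -> injective q ->
  w != inl u -> w != inr v -> ~ on_segment (join_map (inl u)) (join_map (inr v)) (join_map w).
Proof.
move=> p_inj q_inj wu wv; case: w wu wv => [w|w] wu wv /on_segment_row_mx [t [_ pw qw]].
- move: qw; rewrite scaler0 add0r => /esym/eqP; rewrite scaler_eq0 (negbTE (q_nz v)) orbF.
  move=> /eqP t0; move: pw; rewrite t0 subr0 scale1r scale0r addr0 => /p_inj w_u.
  by rewrite w_u eqxx in wu.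
- move: pw; rewrite scaler0 addr0 => /esym/eqP; rewrite scaler_eq0 (negbTE (p_nz u)) orbF.
  rewrite subr_eq0 => /eqP t1; move: qw; rewrite -t1 subrr scale0r add0r scale1r.
  by move=> /q_inj w_v; rewrite w_v eqxx in wv.
Qed.

Lemma join_embedding : unit_dist_embedding e1 p -> unit_dist_embedding e2 q ->
  (forall a b, sqdist (p a) 0 + sqdist (q b) 0 = 1) ->
  unit_dist_embedding (graph_join e1 e2) join_map.
Proof.
move=> [p_inj p_edge p_seg] [q_inj q_edge q_seg] pq_dist; split.
- move=> [a|b] [a'|b'] /= /eq_row_mx [pa qb].
  + by rewrite (p_inj _ _ pa).
  + by move: (p_nz a); rewrite pa eqxx.
  + by move: (p_nz a'); rewrite -pa eqxx.
  + by rewrite (q_inj _ _ qb).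
- move=> [a|b] [a'|b'] /= uv; rewrite /edist sqdist_row_mx.
  + by rewrite sqdist_xx addr0 -(p_edge _ _ uv).
  + by rewrite (sqdistC 0) pq_dist sqrtr1.
  + by rewrite (sqdistC 0) pq_dist sqrtr1.
  + by rewrite sqdist_xx add0r -(q_edge _ _ uv).
- move=> [a|b] [a'|b'] w /= uv wu wv.
  + case: w wu wv => [w|w] wu wv /on_segment_row_mx [t [t01 pw qw]].
      apply: (p_seg a a' w uv); [exact: contra wu => /eqP -> | exact: contra wv => /eqP ->|].
      by exists t.
    by move: qw; rewrite !scaler0 addr0 => /eqP; rewrite (negbTE (q_nz w)).
  + exact: join_cross_segment.
  + by move=> /on_segment_sym; apply: join_cross_segment.
  + case: w wu wv => [w|w] wu wv /on_segment_row_mx [t [t01 pw qw]].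
      by move: pw; rewrite !scaler0 addr0 => /eqP; rewrite (negbTE (p_nz w)).
    apply: (q_seg b b' w uv); [exact: contra wu => /eqP -> | exact: contra wv => /eqP ->|].
    by exists t.
Qed.

End Join.

Lemma spherical_join_embedding (R : realType) (T1 T2 : finType) (e1 : rel T1)
    (e2 : rel T2) (n1 n2 : nat) (r1 r2 : R) :
  0 < r1 -> 0 < r2 -> r1 ^+ 2 + r2 ^+ 2 = 1 ->
  spherical_embedding e1 n1 r1 -> spherical_embedding e2 n2 r2 ->
  has_unit_dist_embedding R (graph_join e1 e2) (n1 + n2).
Proof.
move=> r1_gt0 r2_gt0 r12 [f1 [c1 [emb1 rad1]]] [f2 [c2 [emb2 rad2]]].
have sq1 a : sqdist (f1 a - c1) 0 = r1 ^+ 2 by rewrite sqdist_sub0 (edist_sq (rad1 a)).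
have sq2 b : sqdist (f2 b - c2) 0 = r2 ^+ 2 by rewrite sqdist_sub0 (edist_sq (rad2 b)).
have nz (n : nat) (x : 'rV[R]_n) r : 0 < r -> sqdist x 0 = r ^+ 2 -> x != 0.
  move=> r_gt0 xr; apply/eqP => x0; move: xr; rewrite x0 sqdist_xx => /esym/eqP.
  by rewrite sqrf_eq0 gt_eqF.
exists (join_map (fun a => f1 a - c1) (fun b => f2 b - c2)).
apply: join_embedding; try exact: unit_dist_embedding_translate.
- by move=> a; apply: nz (sq1 a).
- by move=> b; apply: nz (sq2 b).
- by move=> a b; rewrite sq1 sq2.
Qed.

Lemma sphere_nondegenerate (R : realType) (T : finType) (k : nat) (g : T -> 'rV[R]_k)
    (c : 'rV[R]_k) (rho : R) (a0 a1 : T) :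
  injective g -> (forall a, sqdist (g a) c = rho) -> a1 != a0 -> 0 < rho /\ (0 < k)%N.
Proof.
move=> g_inj g_rad a10.
have rho_gt0 : 0 < rho.
  rewrite lt_def -{2}(g_rad a0) sqdist_ge0 andbT; apply: contra a10 => /eqP rho0.
  have g_c a : g a = c by apply: sqdist_eq0; rewrite g_rad.
  by apply/eqP/g_inj; rewrite !g_c.
split=> //; apply: (@dim_gt0 _ _ (g a0) c); apply: contraTneq rho_gt0 => g_c.
by rewrite -(g_rad a0) g_c sqdist_xx ltxx.
Qed.

Section JoinSplit.
Variables (R : realType) (T1 T2 : finType) (n : nat).
Variables (P : T1 -> 'rV[R]_n) (Q : T2 -> 'rV[R]_n) (a0 : T1) (b0 : T2).
Hypothesis cross_unit : forall a b, sqdist (P a) (Q b) = 1.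

(* All cross distances being equal, the two difference families are
   orthogonal. *)
Lemma cross_orth a b : dot (P a - P a0) (Q b - Q b0) = 0.
Proof.
have := polarization (P a) (P a0) (Q b) (Q b0).
by rewrite !cross_unit addrK subrr => /eqP; rewrite mulf_eq0 pnatr_eq0 => /eqP.
Qed.

Variables (s1 s2 : seq 'rV[R]_n).
Hypotheses (s_on : orthonormal (s1 ++ s2)) (s_full : forall x, proj (s1 ++ s2) x = x).
Hypothesis s1_span : forall a, proj s1 (P a - P a0) = P a - P a0.
Hypothesis s1_orth :
  forall w, (forall a, dot w (P a - P a0) = 0) -> forall b, b \in s1 -> dot w b = 0.

Definition split_left (a : T1) : 'rV[R]_(size s1) := coord s1 (P a - P a0).
Definition split_center : 'rV[R]_(size s1) := coord s1 (Q b0 - P a0).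
Definition split_right (b : T2) : 'rV[R]_(size s2) := coord s2 (Q b - P a0).

Lemma coord2_left a : coord s2 (P a - P a0) = 0.
Proof.
apply/rowP => j; rewrite !mxE -s1_span dotC dot_proj_orth //.
by move=> u /(nthP 0) [i lt_i <-]; rewrite dotC (orthonormal_cat_orth s_on lt_i).
Qed.

Lemma coord1_right b : coord s1 (Q b - P a0) = split_center.
Proof.
have -> : Q b - P a0 = (Q b - Q b0) + (Q b0 - P a0) by rewrite addrA subrK.
rewrite coordD -[RHS]add0r; congr (_ + _); apply/rowP => j; rewrite !mxE.
by apply: s1_orth; [move=> a; rewrite dotC cross_orth | apply: mem_nth].
Qed.

Lemma sqdist_split_left a a' : sqdist (split_left a) (split_left a') = sqdist (P a) (P a').
Proof.
have := sqdist_coord (P a - P a0) (P a' - P a0) s_full.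
by rewrite !coord2_left sqdist_xx addr0 sqdist_translate.
Qed.

Lemma sqdist_split_right b b' :
  sqdist (split_right b) (split_right b') = sqdist (Q b) (Q b').
Proof.
have := sqdist_coord (Q b - P a0) (Q b' - P a0) s_full.
by rewrite !coord1_right sqdist_xx add0r sqdist_translate.
Qed.

(* Pythagoras applied to a cross edge. *)
Lemma split_radii a b : sqdist (split_left a) split_center + sqdist (split_right b) 0 = 1.
Proof.
have := sqdist_coord (P a - P a0) (Q b - P a0) s_full.
by rewrite coord1_right coord2_left sqdist_translate cross_unit (sqdistC 0).
Qed.

Lemma lift_left a : P a = P a0 + split_left a *m rows_mx s1.
Proof. by rewrite /split_left coord_mulmx s1_span addrC subrK. Qed.

Lemma lift_right b : Q b = (P a0 + split_center *m rows_mx s1) + split_right b *m rows_mx s2.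
Proof.
by rewrite -(coord1_right b) /split_right !coord_mulmx -addrA -proj_cat s_full addrC subrK.
Qed.

Variables (e1 : rel T1) (e2 : rel T2).
Hypotheses (P_emb : unit_dist_embedding e1 P) (Q_emb : unit_dist_embedding e2 Q).

Lemma split_left_embedding : unit_dist_embedding e1 split_left.
Proof. exact: unit_dist_embedding_lift lift_left sqdist_split_left P_emb. Qed.

Lemma split_right_embedding : unit_dist_embedding e2 split_right.
Proof. exact: unit_dist_embedding_lift lift_right sqdist_split_right Q_emb. Qed.

Let rho1 := sqdist (split_left a0) split_center.
Let rho2 := sqdist (split_right b0) 0.

Lemma radius_left a : sqdist (split_left a) split_center = rho1.
Proof. by apply: (addIr rho2); rewrite /rho1 /rho2 !split_radii. Qed.

Lemma radius_right b : sqdist (split_right b) 0 = rho2.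
Proof. by apply: (addrI rho1); rewrite /rho1 /rho2 !split_radii. Qed.

Lemma split_spherical (a1 : T1) (b1 : T2) : a1 != a0 -> b1 != b0 ->
  exists (n1 n2 : nat) (r1 r2 : R),
    [/\ (1 <= n1)%N, (1 <= n2)%N, (n1 + n2 = n)%N, 0 < r1 < 1 & 0 < r2 < 1] /\
    [/\ r1 ^+ 2 + r2 ^+ 2 = 1, spherical_embedding e1 n1 r1 &
        spherical_embedding e2 n2 r2].
Proof.
move=> a10 b10; have [left_inj _ _] := split_left_embedding.
have [right_inj _ _] := split_right_embedding.
have [rho1_gt0 n1_gt0] := sphere_nondegenerate left_inj radius_left a10.
have [rho2_gt0 n2_gt0] := sphere_nondegenerate right_inj radius_right b10.
have rho12 : rho1 + rho2 = 1 by apply: split_radii.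
have sqrt_unit rho : 0 < rho < 1 -> 0 < Num.sqrt rho < 1.
  by case/andP=> rho_gt0 rho_lt1; rewrite sqrtr_gt0 rho_gt0 -sqrtr1 ltr_sqrt.
exists (size s1), (size s2), (Num.sqrt rho1), (Num.sqrt rho2); split; split => //.
- by rewrite -size_cat size_onb.
- by apply: sqrt_unit; rewrite rho1_gt0 -rho12 ltrDl.
- by apply: sqrt_unit; rewrite rho2_gt0 -rho12 ltrDr.
- by rewrite !sqr_sqrtr ?ltW.
- exists split_left, split_center; split; first exact: split_left_embedding.
  by move=> a; rewrite /edist radius_left.
- exists split_right, 0; split; first exact: split_right_embedding.
  by move=> b; rewrite /edist radius_right.
Qed.

End JoinSplit.

Lemma join_embedding_split (R : realType) (T1 T2 : finType) (e1 : rel T1) (e2 : rel T2)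
    (n : nat) :
  (2 <= #|T1|)%N -> (2 <= #|T2|)%N -> has_unit_dist_embedding R (graph_join e1 e2) n ->
  exists (n1 n2 : nat) (r1 r2 : R),
    [/\ (1 <= n1)%N, (1 <= n2)%N, (n1 + n2 = n)%N, 0 < r1 < 1 & 0 < r2 < 1] /\
    [/\ r1 ^+ 2 + r2 ^+ 2 = 1, spherical_embedding e1 n1 r1 &
        spherical_embedding e2 n2 r2].
Proof.
move=> /card_gt1P [a0 [a1 [_ _ a01]]] /card_gt1P [b0 [b1 [_ _ b01]]] [F F_emb].
pose P a := F (inl a); pose Q b := F (inr b).
have P_emb : unit_dist_embedding e1 P :=
  unit_dist_embedding_sub inl_inj (fun u v uv => uv) F_emb.
have Q_emb : unit_dist_embedding e2 Q :=
  unit_dist_embedding_sub inr_inj (fun u v uv => uv) F_emb.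
have cross a b : sqdist (P a) (Q b) = 1.
  by have [_ F_edge _] := F_emb; rewrite (edist_sq (F_edge (inl a) (inr b) isT)) expr1n.
have [s1 [s2 [s_on s_full s1_span s1_orth]]] := adapted_onb [seq P a - P a0 | a <- enum T1].
rewrite eq_sym in a01 b01.
apply: (split_spherical cross s_on s_full _ _ P_emb Q_emb a01 b01).
- by move=> a; apply/s1_span/map_f; rewrite mem_enum.
- by move=> w w_P; apply: s1_orth => _ /mapP [a _ ->].
Qed.

Unset Implicit Arguments. Set Strict Implicit.

Theorem mainTheorem4 (R : realType) (T1 T2 : finType) (e1 : rel T1) (e2 : rel T2) :
  simple_graph e1 -> simple_graph e2 ->
  (2 <= #|T1|)%N -> (2 <= #|T2|)%N ->
  (forall (n1 n2 : nat) (r1 r2 : R),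
      (1 <= n1)%N -> (1 <= n2)%N ->
      0 < r1 < 1 -> 0 < r2 < 1 -> r1 ^+ 2 + r2 ^+ 2 = 1 ->
      spherical_embedding e1 n1 r1 -> spherical_embedding e2 n2 r2 ->
      has_unit_dist_embedding R (graph_join e1 e2) (n1 + n2))
  /\
  (forall n : nat,
      has_unit_dist_embedding R (graph_join e1 e2) n ->
      exists (n1 n2 : nat) (r1 r2 : R),
        [/\ (1 <= n1)%N, (1 <= n2)%N, (n1 + n2 = n)%N,
            0 < r1 < 1 & 0 < r2 < 1] /\
            [/\ r1 ^+ 2 + r2 ^+ 2 = 1,
                spherical_embedding e1 n1 r1 &
                spherical_embedding e2 n2 r2]).
Proof.
move=> _ _ T1_ge2 T2_ge2; split; last by move=> n; apply: join_embedding_split.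
move=> n1 n2 r1 r2 _ _ /andP [r1_gt0 _] /andP [r2_gt0 _] r12.
exact: spherical_join_embedding.
Qed.
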